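(* Let $R$ be a Noetherian local ring, $F=\{J_n\}_{n\ge0}$ a Noetherian filtration of ideals and $I$ an ideal of $R$. Then $\operatorname{ar}_F(I)=d(\operatorname{in}_F(I))$.
   Context: A filtration $F=\{J_n\}$ satisfies $J_0=R$, $J_m\subseteq J_n$ for $m>n$, $J_mJ_n\subseteq J_{m+n}$; it is Noetherian if $\Re_F(R)=\bigoplus_nJ_n$ is Noetherian. $\operatorname{gr}_F(R)=\bigoplus_nJ_n/J_{n+1}$; for $0\ne f\in J_n\setminus J_{n+1}$, $f^*$ is its class in $J_n/J_{n+1}$, $0^*=0$, and $\operatorname{in}_F(I)$ is the ideal of $\operatorname{gr}_F(R)$ generated by $f^*$, $f\in I$. For a graded ideal $Q$, $d(Q)$ is the maximum degree of the elements of a minimal homogeneous generating set of $Q$. $\operatorname{ar}_F(I)=d\big(\bigoplus_n(J_n\cap I)\big)$, computed in $\Re_F(R)$. *)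

From mathcomp Require Import all_boot all_order all_algebra.
Set Implicit Arguments. Unset Strict Implicit. Unset Printing Implicit Defensive.
Import GRing.Theory.
Local Open Scope ring_scope.

Definition is_ideal (R : comNzRingType) (I : R -> Prop) : Prop :=
  I 0 /\ (forall x y, I x -> I y -> I (x + y)) /\ (forall a x, I x -> I (a * x)).

Definition span (R : comNzRingType) (s : seq R) (x : R) : Prop :=
  exists c : nat -> R, x = \sum_(i < size s) c i * s`_i.

Definition noetherian_ring (R : comNzRingType) : Prop :=
  forall I : R -> Prop, is_ideal I -> exists s : seq R, forall x, I x <-> span s x.

Definition local_ring (R : comNzRingType) : Prop :=
  exists m : R -> Prop, is_ideal m /\ ~ m 1 /\
    forall I : R -> Prop, is_ideal I -> ~ I 1 -> forall x, I x -> m x.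

Definition filtration (R : comNzRingType) (J : nat -> R -> Prop) : Prop :=
  (forall n, is_ideal (J n)) /\ (forall x, J 0%N x) /\
  (forall m n, (n < m)%N -> forall x, J m x -> J n x) /\
  (forall m n x y, J m x -> J n y -> J (m + n)%N (x * y)).

(* The Rees algebra Re_F(R) = (+)_n J_n t^n, as a subset of R[t]. *)
Definition rees (R : comNzRingType) (J : nat -> R -> Prop) (p : {poly R}) : Prop :=
  forall i, J i p`_i.

Definition rees_ideal (R : comNzRingType) (J : nat -> R -> Prop) (Q : {poly R} -> Prop) : Prop :=
  (forall p, Q p -> rees J p) /\ Q 0 /\ (forall p q, Q p -> Q q -> Q (p + q)) /\
  (forall a p, rees J a -> Q p -> Q (a * p)).

(* Noetherian filtration: Re_F(R) is a Noetherian ring, i.e. every ideal of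
   Re_F(R) is finitely generated (with coefficients in Re_F(R)). *)
Definition noetherian_filtration (R : comNzRingType) (J : nat -> R -> Prop) : Prop :=
  forall Q : {poly R} -> Prop, rees_ideal J Q ->
    exists s : seq {poly R}, (forall p, p \in s -> rees J p) /\
      forall p, Q p <-> exists c : nat -> {poly R},
        (forall i, rees J (c i)) /\ p = \sum_(i < size s) c i * s`_i.

(* A homogeneous element is represented by a pair (d, c) : degree d and c in J_d
   (standing for c t^d in Re_F(R), resp. the class of c in J_d/J_{d+1} in gr_F(R)).
   A graded ideal Q is represented by its homogeneous components Q n (subsets of J_n). *)
Definition hnth (R : comNzRingType) (S : seq (nat * R)) i := nth (0%N, 0) S i.

(* degree n homogeneous component of the ideal of Re_F(R) generated by S:
   sums of r_i * c_i with r_i in J_{n - d_i}. *)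
Definition rees_comb (R : comNzRingType) (J : nat -> R -> Prop) (S : seq (nat * R))
    (n : nat) (x : R) : Prop :=
  exists r : nat -> R,
    (forall i, (i < size S)%N -> ((hnth S i).1 <= n)%N -> J (n - (hnth S i).1)%N (r i)) /\
    x = \sum_(i < size S | ((hnth S i).1 <= n)%N) r i * (hnth S i).2.

(* degree n homogeneous component of the ideal of gr_F(R) generated by S,
   membership tested on representatives x in J_n (modulo J_{n+1}). *)
Definition gr_comb (R : comNzRingType) (J : nat -> R -> Prop) (S : seq (nat * R))
    (n : nat) (x : R) : Prop :=
  exists y, rees_comb J S n y /\ J n.+1 (x - y).

Definition homogeneous_list (R : comNzRingType) (J : nat -> R -> Prop) (S : seq (nat * R)) :=
  forall p, p \in S -> J p.1 p.2.

Definition rees_gen (R : comNzRingType) (J : nat -> R -> Prop) (Q : nat -> R -> Prop)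
    (S : seq (nat * R)) : Prop :=
  homogeneous_list J S /\ forall n x, Q n x <-> rees_comb J S n x.

Definition gr_gen (R : comNzRingType) (J : nat -> R -> Prop) (Q : nat -> R -> Prop)
    (S : seq (nat * R)) : Prop :=
  homogeneous_list J S /\ forall n x, J n x -> (Q n x <-> gr_comb J S n x).

Definition rees_min_gen (R : comNzRingType) (J : nat -> R -> Prop) (Q : nat -> R -> Prop)
    (S : seq (nat * R)) : Prop :=
  rees_gen J Q S /\ forall p, p \in S -> ~ rees_gen J Q (rem p S).

Definition gr_min_gen (R : comNzRingType) (J : nat -> R -> Prop) (Q : nat -> R -> Prop)
    (S : seq (nat * R)) : Prop :=
  gr_gen J Q S /\ forall p, p \in S -> ~ gr_gen J Q (rem p S).

(* maximal degree of a (finite) homogeneous generating set; 0 for the empty set *)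
Definition maxdeg (R : Type) (S : seq (nat * R)) : nat := \max_(p <- S) p.1.

(* The graded ideal (+)_n (J_n cap I) of Re_F(R) *)
Definition ar_ideal (R : comNzRingType) (J : nat -> R -> Prop) (I : R -> Prop) :
    nat -> R -> Prop := fun n x => J n x /\ I x.

(* in_F(I): ideal of gr_F(R) generated by the initial forms f^* (f in I, f in J_m \ J_{m+1});
   degree n component, on representatives x in J_n. *)
Definition in_ideal (R : comNzRingType) (J : nat -> R -> Prop) (I : R -> Prop) :
    nat -> R -> Prop := fun n x =>
  J n x /\ exists L : seq (nat * R),
    (forall p, p \in L -> I p.2 /\ J p.1 p.2 /\ ~ J p.1.+1 p.2) /\ gr_comb J L n x.

From mathcomp Require Import all_boot all_order all_algebra.
From mathcomp Require Import zify ring.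
From Stdlib Require Import Classical FunctionalExtensionality PropExtensionality.
Set Implicit Arguments. Unset Strict Implicit. Unset Printing Implicit Defensive.
Import GRing.Theory.
Local Open Scope ring_scope.

(* Let A = (+)_n (J_n cap I) t^n, a graded ideal of the Rees algebra, and let
   M = m + J_1 t + J_2 t^2 + ... be the homogeneous maximal ideal of Re_F(R).
   By the graded Nakayama lemma no element of a minimal homogeneous generating
   set of A lies in M A, and no element of a minimal generating set of in_F(I)
   is congruent modulo J_{n+1} to an element of (M A)_n.
   Every element of A of degree n > ar_F(I) lies in (M A)_n, so in_F(I) needs
   no generator of degree > ar_F(I).  Conversely, let p be a minimal generator of
   A of degree d = ar_F(I) > d(in_F(I)).  Then p = y + z with y in (M A)_d and
   z in A_{d+1} = (M A)_{d+1}, and (M A)_{d+1} is contained in (M A)_d because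
   J_1 is contained in m (when J_1 = R, minimality forces d = 0 directly); so p
   lies in M A, a contradiction. *)

Section Ideals.
Variables (R : comNzRingType) (I : R -> Prop).
Hypothesis hI : is_ideal I.

Lemma ideal0 : I 0.
Proof. by case: hI. Qed.

Lemma idealD x y : I x -> I y -> I (x + y).
Proof. by case: hI => _ [+ _]; apply. Qed.

Lemma idealMl a x : I x -> I (a * x).
Proof. by case: hI => _ [_]; apply. Qed.

Lemma idealMr a x : I x -> I (x * a).
Proof. by rewrite mulrC; apply: idealMl. Qed.

Lemma idealB x y : I x -> I y -> I (x - y).
Proof. by move=> Ix Iy; rewrite -mulN1r; apply/idealD/idealMl. Qed.

Lemma ideal_sum (T : Type) (r : seq T) (P : pred T) (F : T -> R) :
  (forall i, P i -> I (F i)) -> I (\sum_(i <- r | P i) F i).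
Proof. by move=> IF; apply: big_ind => //; [exact: ideal0 | exact: idealD]. Qed.

End Ideals.

Section Filtration.
Variables (R : comNzRingType) (J : nat -> R -> Prop).
Hypothesis hF : filtration J.

Lemma filtration_ideal n : is_ideal (J n).
Proof. by case: hF. Qed.

Lemma filtration_top x : J 0 x.
Proof. by case: hF => _ []. Qed.

Lemma filtration_le m n x : (m <= n)%N -> J n x -> J m x.
Proof.
case: hF => _ [_ [Jlt _]]; rewrite leq_eqVlt => /orP [/eqP -> //|lt_mn].
exact: Jlt.
Qed.

Lemma filtrationM a b c x y : (a + b)%N = c -> J a x -> J b y -> J c (x * y).
Proof. by case: hF => _ [_ [_ JM]] <-; apply: JM. Qed.

Lemma filtration0 n : J n 0.
Proof. exact: ideal0 (filtration_ideal n). Qed.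

Lemma filtrationD n x y : J n x -> J n y -> J n (x + y).
Proof. by apply: idealD; apply: filtration_ideal. Qed.

Lemma filtrationMl n a x : J n x -> J n (a * x).
Proof. by apply: idealMl; apply: filtration_ideal. Qed.

End Filtration.

(* Inductive counterpart of [rees_comb], see [rees_combP]. *)
Inductive rees_span (R : comNzRingType) (J : nat -> R -> Prop) (S : seq (nat * R))
    (n : nat) : R -> Prop :=
| rees_span0 : rees_span J S n 0
| rees_spanD x y : rees_span J S n x -> rees_span J S n y -> rees_span J S n (x + y)
| rees_span_gen (p : nat * R) r :
    p \in S -> (p.1 <= n)%N -> J (n - p.1)%N r -> rees_span J S n (r * p.2).

Section ReesSpan.
Variables (R : comNzRingType) (J : nat -> R -> Prop).
Hypothesis hF : filtration J.

Lemma rees_span_sum S n (T : Type) (r : seq T) (P : pred T) (F : T -> R) :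
  (forall i, P i -> rees_span J S n (F i)) -> rees_span J S n (\sum_(i <- r | P i) F i).
Proof. by move=> SF; apply: big_ind => //; [exact: rees_span0 | exact: rees_spanD]. Qed.

Lemma rees_span_subset S S' n x :
  {subset S <= S'} -> rees_span J S n x -> rees_span J S' n x.
Proof.
move=> sSS'; elim=> [|y z _ Sy _ Sz|p r Sp le_pn Jr]; first exact: rees_span0.
- exact: rees_spanD.
- by apply: rees_span_gen => //; apply: sSS'.
Qed.

Lemma rees_span_shift S k n r x :
  J k r -> rees_span J S n x -> rees_span J S (k + n) (r * x).
Proof.
move=> Jr; elim=> [|y z _ Sy _ Sz|p r' Sp le_pn Jr'].
- by rewrite mulr0; exact: rees_span0.
- by rewrite mulrDr; exact: rees_spanD.
- rewrite mulrA; apply: rees_span_gen => //; first by lia.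
  by apply: (filtrationM hF _ Jr Jr'); lia.
Qed.

Lemma rees_spanMl S n a x : rees_span J S n x -> rees_span J S n (a * x).
Proof. by move/(rees_span_shift (filtration_top hF a)). Qed.

Lemma rees_span_mem S p : p \in S -> rees_span J S p.1 p.2.
Proof.
move=> Sp; rewrite -[p.2]mul1r; apply: (rees_span_gen (p := p)) => //.
by rewrite subnn; exact: filtration_top.
Qed.

Lemma rees_combP S n x : rees_comb J S n x <-> rees_span J S n x.
Proof.
split=> [[r [Jr ->]]|].
  apply: rees_span_sum => i le_in; apply: rees_span_gen => //; last exact: Jr.
  exact: mem_nth.
elim=> [|y z _ [r1 [J1 ->]] _ [r2 [J2 ->]]|p r Sp le_pn Jr].
- exists (fun _ => 0); split=> [i _ _ /=|]; first exact: (filtration0 hF).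
  by rewrite big1 // => i _; rewrite mul0r.
- exists (fun i => r1 i + r2 i); split=> [i ltiS le_in /=|].
    by apply: (filtrationD hF); [apply: J1 | apply: J2].
  by rewrite -big_split /=; apply: eq_bigr => i _; rewrite mulrDl.
- have ltpS : (index p S < size S)%N by rewrite index_mem.
  have Sp_nth : hnth S (index p S) = p by rewrite /hnth nth_index.
  exists (fun i => if i == index p S then r else 0); split=> [i _ _|].
    by case: eqP => [->|_]; [rewrite Sp_nth | exact: (filtration0 hF)].
  rewrite (bigD1 (Ordinal ltpS)) /=; last by rewrite Sp_nth.
  rewrite eqxx Sp_nth big1 ?addr0 // => i /andP [_ neq_i].
  suff /negbTE -> : nat_of_ord i != index p S by rewrite mul0r.
  by apply: contra neq_i => /eqP eq_i; apply/eqP/val_inj.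
Qed.

Lemma rees_span_rem_decomp S p n x : rees_span J S n x ->
  exists l g, rees_span J (rem p S) n g /\ x = l * p.2 + g /\
    ((p.1 <= n)%N -> J (n - p.1)%N l) /\ ((n < p.1)%N -> l = 0).
Proof.
elim=> [|y z _ [l1 [g1 [G1 [-> [L1 Z1]]]]] _ [l2 [g2 [G2 [-> [L2 Z2]]]]]|q r Sq le_qn Jr].
- exists 0, 0; split; first exact: rees_span0.
  by rewrite mul0r addr0; split=> //; split=> // _; exact: (filtration0 hF).
- exists (l1 + l2), (g1 + g2); split; first exact: rees_spanD.
  split; first by rewrite mulrDl addrACA.
  split=> [le_pn|lt_np]; first by apply: (filtrationD hF); [apply: L1 | apply: L2].
  by rewrite Z1 // Z2 // addr0.
- have [<-|neq_qp] := eqVneq q p.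
    exists r, 0; split; first exact: rees_span0.
    by rewrite addr0 ltnNge le_qn.
  exists 0, (r * q.2); split; first by apply: rees_span_gen => //; apply: rem_mem.
  by rewrite mul0r add0r; split=> //; split=> // _; exact: (filtration0 hF).
Qed.

Lemma rees_span_rem_lt S p n x :
  (n < p.1)%N -> rees_span J S n x -> rees_span J (rem p S) n x.
Proof.
move=> lt_np /(rees_span_rem_decomp p) [l [g [Sg [-> [_ l0]]]]].
by rewrite l0 // mul0r add0r.
Qed.

Lemma rees_span_rem S p n x : rees_span J (rem p S) p.1 p.2 ->
  rees_span J S n x -> rees_span J (rem p S) n x.
Proof.
move=> Sp /(rees_span_rem_decomp p) [l [g [Sg [-> [Jl l0]]]]].
have [le_pn|lt_np] := leqP p.1 n; last by rewrite l0 // mul0r add0r.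
apply: rees_spanD => //.
by rewrite -(subnK le_pn); apply: rees_span_shift => //; apply: Jl.
Qed.

Lemma rees_span_rem_mod S p n x :
  (exists g, rees_span J (rem p S) p.1 g /\ J p.1.+1 (p.2 - g)) ->
  rees_span J S n x -> exists y, rees_span J (rem p S) n y /\ J n.+1 (x - y).
Proof.
move=> [g [Sg Jpg]] /(rees_span_rem_decomp p) [l [g' [Sg' [-> [Jl l0]]]]].
have [le_pn|lt_np] := leqP p.1 n; last first.
  by exists g'; rewrite l0 // mul0r add0r subrr; split=> //; exact: (filtration0 hF).
exists (l * g + g'); split.
  apply: rees_spanD => //.
  by rewrite -(subnK le_pn); apply: rees_span_shift => //; apply: Jl.
have -> : l * p.2 + g' - (l * g + g') = l * (p.2 - g) by ring.
by apply: (filtrationM hF _ (Jl le_pn) Jpg); lia.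
Qed.

Lemma rees_genP Q S n x : rees_gen J Q S -> Q n x <-> rees_span J S n x.
Proof. by move=> [_ QS]; apply: iff_trans (QS n x) (rees_combP S n x). Qed.

Lemma rees_gen_mem Q S p : rees_gen J Q S -> p \in S -> Q p.1 p.2.
Proof. by move=> QS Sp; apply/(rees_genP _ _ QS)/rees_span_mem. Qed.

Lemma gr_genP Q S n x : gr_gen J Q S -> J n x ->
  (Q n x <-> exists y, rees_span J S n y /\ J n.+1 (x - y)).
Proof.
move=> [_ QS] Jx; apply: iff_trans (QS n x Jx) _.
by split=> [] [y [Sy Jxy]]; exists y; split=> //; apply/rees_combP.
Qed.

Lemma gr_gen_mem Q S p : gr_gen J Q S -> p \in S -> Q p.1 p.2.
Proof.
move=> QS Sp; have Jp := QS.1 p Sp.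
apply/(gr_genP QS Jp); exists p.2; split; first exact: rees_span_mem.
by rewrite subrr; exact: (filtration0 hF).
Qed.

End ReesSpan.

Lemma exists_minimal_rem (T : eqType) (P : seq T -> Prop) s : P s ->
  exists s', P s' /\ forall x, x \in s' -> ~ P (rem x s').
Proof.
elim: {s}(size s) {-2}s (leqnn (size s)) => [|n IHn] s le_sn Ps.
  by exists s; split=> // x; case: s le_sn Ps.
have [[x [sx Px]]|min_s] := classic (exists x, x \in s /\ P (rem x s)).
  by apply: (IHn (rem x s)) => //; rewrite size_rem //; case: (size s) le_sn.
by exists s; split=> // x sx Px; apply: min_s; exists x.
Qed.

Lemma leq_maxdeg (T : eqType) (S : seq (nat * T)) p : p \in S -> (p.1 <= maxdeg S)%N.
Proof. by move=> Sp; apply: leq_bigmax_seq. Qed.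

Lemma maxdeg_attained (T : eqType) (S : seq (nat * T)) :
  S != [::] -> exists2 p, p \in S & p.1 = maxdeg S.
Proof.
elim: S => [//|p [|p' S] IHS] _; rewrite [maxdeg _]big_cons.
  by exists p; rewrite ?mem_head // big_nil maxn0.
have [q Sq eq_q] := IHS isT.
rewrite -/(maxdeg (p' :: S)) -eq_q /maxn; case: ltnP => _.
  by exists q; rewrite // in_cons Sq orbT.
by exists p; rewrite ?mem_head.
Qed.

Section LargestProperIdeal.
Variables (R : comNzRingType) (m : R -> Prop).
Hypotheses (hm : is_ideal m) (hm1 : ~ m 1).
Hypothesis hmax : forall K : R -> Prop, is_ideal K -> ~ K 1 -> forall x, K x -> m x.

Lemma largest_proper_1B_unit u : m u -> exists v, v * (1 - u) = 1.
Proof.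
move=> mu; apply: NNPP => not_unit.
pose K x := exists v, x = v * (1 - u).
have K_ideal : is_ideal K.
  split; first by exists 0; rewrite mul0r.
  split; first by move=> x y [v1 ->] [v2 ->]; exists (v1 + v2); rewrite mulrDl.
  by move=> a x [v ->]; exists (a * v); rewrite mulrA.
have K1 : ~ K 1 by move=> [v eq_v]; apply: not_unit; exists v.
have m1B : m (1 - u) by apply: (hmax K_ideal K1); exists 1; rewrite mul1r.
by apply: hm1; rewrite -(subrK u 1); apply: idealD.
Qed.

End LargestProperIdeal.

Definition graded_ideal (R : comNzRingType) (J : nat -> R -> Prop) (A : nat -> R -> Prop) :=
  (forall n, is_ideal (A n)) /\ (forall n x, A n x -> J n x) /\
  (forall k n r x, J k r -> A n x -> A (k + n)%N (r * x)).

(* The image of a graded ideal A of Re_F(R) in gr_F(R). *)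
Definition gr_in (R : comNzRingType) (J : nat -> R -> Prop) (A : nat -> R -> Prop) :
    nat -> R -> Prop :=
  fun n x => J n x /\ exists a, A n a /\ J n.+1 (x - a).

(* (M A)_n, where M = m + J_1 t + J_2 t^2 + ... is the homogeneous maximal ideal
   of Re_F(R) for a local ring (R, m). *)
Inductive max_mul (R : comNzRingType) (J : nat -> R -> Prop) (m : R -> Prop)
    (A : nat -> R -> Prop) (n : nat) : R -> Prop :=
| max_mul0 : max_mul J m A n 0
| max_mulD x y : max_mul J m A n x -> max_mul J m A n y -> max_mul J m A n (x + y)
| max_mul_max u a : m u -> A n a -> max_mul J m A n (u * a)
| max_mul_pos k r a :
    (0 < k)%N -> (k <= n)%N -> J k r -> A (n - k)%N a -> max_mul J m A n (r * a).

Section GradedIdeal.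
Variables (R : comNzRingType) (J : nat -> R -> Prop) (A : nat -> R -> Prop).
Hypotheses (hF : filtration J) (hA : graded_ideal J A).

Lemma graded_ideal_deg n : is_ideal (A n).
Proof. by case: hA. Qed.

Lemma graded_ideal_sub n x : A n x -> J n x.
Proof. by case: hA => _ [AJ _]; apply: AJ. Qed.

Lemma graded_ideal_shift k n r x : J k r -> A n x -> A (k + n)%N (r * x).
Proof. by case: hA => _ [_ A_shift]; apply: A_shift. Qed.

Lemma rees_span_graded S n x :
  (forall p, p \in S -> A p.1 p.2) -> rees_span J S n x -> A n x.
Proof.
move=> SA; elim=> [|y z _ Ay _ Az|p r Sp le_pn Jr].
- exact: (ideal0 (graded_ideal_deg n)).
- exact: (idealD (graded_ideal_deg n) Ay Az).
- by rewrite -(subnK le_pn); apply: graded_ideal_shift Jr (SA p Sp).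
Qed.

Lemma gr_in_graded n a : A n a -> gr_in J A n a.
Proof.
move=> Aa; split; first exact: graded_ideal_sub.
by exists a; rewrite subrr; split=> //; exact: (filtration0 hF).
Qed.

Lemma rees_gen_gr_in S : rees_gen J A S -> gr_gen J (gr_in J A) S.
Proof.
move=> AS; split=> [|n x Jx]; first exact: AS.1.
split=> [[_ [a [Aa Jxa]]]|[y [Sy Jxy]]].
  by exists a; split=> //; apply/(rees_combP hF)/(rees_genP hF _ _ AS).
split=> //; exists y; split=> //.
exact/(rees_genP hF _ _ AS)/(rees_combP hF).
Qed.

Variable m : R -> Prop.
Hypotheses (hm : is_ideal m) (hm1 : ~ m 1).
Hypothesis hmax : forall K : R -> Prop, is_ideal K -> ~ K 1 -> forall x, K x -> m x.

Lemma max_mul_graded n x : max_mul J m A n x -> A n x.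
Proof.
elim=> [|y z _ Ay _ Az|u a mu Aa|k r a _ le_kn Jr Aa].
- exact: (ideal0 (graded_ideal_deg n)).
- exact: (idealD (graded_ideal_deg n) Ay Az).
- exact: (idealMl (graded_ideal_deg n) _ Aa).
- by rewrite -(subnKC le_kn); apply: graded_ideal_shift.
Qed.

Lemma rees_span_max_mul S n x : (forall p, p \in S -> A p.1 p.2) ->
  (maxdeg S < n)%N -> rees_span J S n x -> max_mul J m A n x.
Proof.
move=> SA lt_Sn; elim=> [|y z _ My _ Mz|p r Sp le_pn Jr].
- exact: max_mul0.
- exact: max_mulD.
have le_pS : (p.1 <= maxdeg S)%N := leq_maxdeg Sp.
apply: (@max_mul_pos _ _ _ _ _ (n - p.1)%N) => //; try lia.
by rewrite subKn //; apply: SA.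
Qed.

Lemma rees_gen_rem_decomp S p s : rees_gen J A S -> p \in S ->
  max_mul J m A p.1 s -> exists u g, m u /\ rees_span J (rem p S) p.1 g /\ s = u * p.2 + g.
Proof.
move=> AS Sp.
elim=> [|y z _ [u1 [g1 [m1 [S1 ->]]]] _ [u2 [g2 [m2 [S2 ->]]]]|u a mu Aa|k r a lt0k le_kp Jr Aa].
- exists 0, 0; split; first exact: (ideal0 hm).
  by rewrite mul0r addr0; split=> //; exact: rees_span0.
- exists (u1 + u2), (g1 + g2); split; first exact: (idealD hm m1 m2).
  by rewrite mulrDl addrACA; split=> //; exact: rees_spanD.
- have /(rees_span_rem_decomp hF p) [l [g [Sg [-> _]]]] := (rees_genP hF _ _ AS).1 Aa.
  exists (u * l), (u * g); split; first exact: (idealMr hm _ mu).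
  by rewrite mulrDr mulrA; split=> //; exact: rees_spanMl.
- have Sa : rees_span J (rem p S) (p.1 - k) a.
    have lt_kp : (p.1 - k < p.1)%N by lia.
    by apply: (rees_span_rem_lt hF lt_kp); apply/(rees_genP hF _ _ AS).
  exists 0, (r * a); rewrite mul0r add0r; split; first exact: (ideal0 hm).
  by split=> //; rewrite -{1}(subnKC le_kp); apply: (rees_span_shift hF).
Qed.

Lemma rees_gen_rem S p : rees_gen J A S -> p \in S -> max_mul J m A p.1 p.2 ->
  rees_gen J A (rem p S).
Proof.
move=> AS Sp /(rees_gen_rem_decomp AS Sp) [u [g [mu [Sg eq_p]]]].
have [v vu1] := largest_proper_1B_unit hm hm1 hmax mu.
have Sp' : rees_span J (rem p S) p.1 p.2.
  have -> : p.2 = v * g.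
    rewrite -[LHS]mul1r -vu1 -mulrA mulrBl mul1r {1}eq_p.
    by rewrite addrAC subrr add0r.
  exact: rees_spanMl.
split=> [q /mem_rem|n x]; first exact: AS.1.
apply: iff_trans (rees_genP hF _ _ AS) _; rewrite (rees_combP hF).
split; first exact: rees_span_rem.
exact: rees_span_subset (@mem_rem _ p S).
Qed.

Lemma rees_min_gen_not_max_mul S p : rees_min_gen J A S -> p \in S ->
  ~ max_mul J m A p.1 p.2.
Proof. by move=> [AS min_S] Sp Mp; apply: (min_S p Sp); apply: rees_gen_rem. Qed.

Local Notation B := (gr_in J A).

Lemma gr_gen_graded T n a : gr_gen J B T -> A n a ->
  exists y, rees_span J T n y /\ J n.+1 (a - y).
Proof. by move=> BT Aa; apply/(gr_genP hF BT (graded_ideal_sub Aa))/gr_in_graded. Qed.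

Lemma gr_gen_rem_decomp T q s : gr_gen J B T -> q \in T -> max_mul J m A q.1 s ->
  exists u g, m u /\ rees_span J (rem q T) q.1 g /\ J q.1.+1 (s - (u * q.2 + g)).
Proof.
move=> BT Tq.
elim=> [|y z _ [u1 [g1 [m1 [S1 J1]]]] _ [u2 [g2 [m2 [S2 J2]]]]|u a mu Aa|k r a lt0k le_kq Jr Aa].
- exists 0, 0; split; first exact: (ideal0 hm).
  by rewrite mul0r addr0 subrr; split; [exact: rees_span0 | exact: (filtration0 hF)].
- exists (u1 + u2), (g1 + g2); split; first exact: (idealD hm m1 m2).
  split; first exact: rees_spanD.
  have -> : y + z - ((u1 + u2) * q.2 + (g1 + g2)) =
            (y - (u1 * q.2 + g1)) + (z - (u2 * q.2 + g2)) by ring.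
  exact: (filtrationD hF).
- have [y [Ty Jay]] := gr_gen_graded BT Aa.
  have [l [g [Sg [eq_y _]]]] := rees_span_rem_decomp hF q Ty.
  exists (u * l), (u * g); split; first exact: (idealMr hm _ mu).
  split; first exact: rees_spanMl.
  have -> : u * a - (u * l * q.2 + u * g) = u * (a - y) by rewrite eq_y; ring.
  exact: (filtrationMl hF).
- have [y [Ty Jay]] := gr_gen_graded BT Aa.
  have lt_kq : (q.1 - k < q.1)%N by lia.
  have Sy : rees_span J (rem q T) (q.1 - k) y := rees_span_rem_lt hF lt_kq Ty.
  exists 0, (r * y); split; first exact: (ideal0 hm).
  split; first by rewrite -{1}(subnKC le_kq); apply: (rees_span_shift hF).
  rewrite mul0r add0r -mulrBr; apply: (filtrationM hF _ Jr Jay); lia.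
Qed.

Lemma gr_gen_rem T q : gr_gen J B T -> q \in T ->
  (exists y, max_mul J m A q.1 y /\ J q.1.+1 (q.2 - y)) -> gr_gen J B (rem q T).
Proof.
move=> BT Tq [y [My Jqy]].
have [u [g [mu [Sg Jyg]]]] := gr_gen_rem_decomp BT Tq My.
have [v vu1] := largest_proper_1B_unit hm hm1 hmax mu.
have q_mod : exists g', rees_span J (rem q T) q.1 g' /\ J q.1.+1 (q.2 - g').
  exists (v * g); split; first exact: rees_spanMl.
  have -> : q.2 - v * g = v * ((q.2 - y) + (y - (u * q.2 + g))).
    by rewrite -[q.2 in LHS]mul1r -vu1; ring.
  by apply: (filtrationMl hF); apply: (filtrationD hF).
split=> [p /mem_rem|n x Jx]; first exact: BT.1.
apply: iff_trans (gr_genP hF BT Jx) _.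
split=> [[y' [Ty' Jxy']]|[y' [Sy' Jxy']]].
  have [y'' [Sy'' Jy'y'']] := rees_span_rem_mod hF q_mod Ty'.
  exists y''; split; first exact/(rees_combP hF).
  have -> : x - y'' = (x - y') + (y' - y'') by rewrite addrA subrK.
  exact: (filtrationD hF).
exists y'; split=> //.
by apply: rees_span_subset (@mem_rem _ q T) _; apply/(rees_combP hF).
Qed.

Lemma gr_min_gen_not_max_mul T q : gr_min_gen J B T -> q \in T ->
  ~ exists y, max_mul J m A q.1 y /\ J q.1.+1 (q.2 - y).
Proof. by move=> [BT min_T] Tq Mq; apply: (min_T q Tq); apply: gr_gen_rem. Qed.

Lemma gr_gen_max_mul T n x : gr_gen J B T -> (maxdeg T < n)%N -> B n x ->
  exists y, max_mul J m A n y /\ J n.+1 (x - y).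
Proof.
move=> BT lt_Tn Bx; have [y [Ty Jxy]] := (gr_genP hF BT Bx.1).1 Bx.
suff [z [Mz Jyz]] : exists z, max_mul J m A n z /\ J n.+1 (y - z).
  exists z; split=> //; have -> : x - z = (x - y) + (y - z) by rewrite addrA subrK.
  exact: (filtrationD hF).
elim: Ty {Jxy} => [|y1 y2 _ [z1 [M1 J1]] _ [z2 [M2 J2]]|q r Tq le_qn Jr].
- by exists 0; rewrite subrr; split; [exact: max_mul0 | exact: (filtration0 hF)].
- exists (z1 + z2); split; first exact: max_mulD.
  by rewrite opprD addrACA; exact: (filtrationD hF).
have [_ [a [Aa Jqa]]] := gr_gen_mem hF BT Tq.
have le_qT : (q.1 <= maxdeg T)%N := leq_maxdeg Tq.
exists (r * a); split.
  apply: (@max_mul_pos _ _ _ _ _ (n - q.1)%N) => //; try lia.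
  by rewrite subKn.
have deg_eq : (n - q.1 + q.1.+1 = n.+1)%N by lia.
by rewrite -mulrBr; apply: (filtrationM hF deg_eq Jr Jqa).
Qed.

Lemma maxdeg_gr_le_rees S T : rees_gen J A S -> gr_min_gen J B T ->
  (maxdeg T <= maxdeg S)%N.
Proof.
move=> AS minT; apply/bigmax_leqP_seq => q Tq _; rewrite leqNgt; apply/negP => lt_Sq.
apply: (gr_min_gen_not_max_mul minT Tq).
have [_ [a [Aa Jqa]]] := gr_gen_mem hF minT.1 Tq.
exists a; split=> //; apply: (rees_span_max_mul (S := S)) lt_Sq _.
  by move=> p; apply: rees_gen_mem AS.
exact/(rees_genP hF _ _ AS).
Qed.

End GradedIdeal.

Lemma rees_lin_comb_mem (R : comNzRingType) (J : nat -> R -> Prop) (s : seq {poly R}) p :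
  filtration J -> p \in s ->
  exists c : nat -> {poly R}, (forall i, rees J (c i)) /\ p = \sum_(i < size s) c i * s`_i.
Proof.
move=> hF sp; exists (fun i => if i == index p s then 1 else 0); split.
  move=> i k; case: eqP => _; last by rewrite coef0; exact: (filtration0 hF).
  by rewrite coef1; case: k => [|k]; [exact: (filtration_top hF) | exact: (filtration0 hF)].
have lt_ps : (index p s < size s)%N by rewrite index_mem.
rewrite (bigD1 (Ordinal lt_ps)) //= eqxx mul1r nth_index // big1 ?addr0 // => i neq_i.
suff /negbTE -> : nat_of_ord i != index p s by rewrite mul0r.
by apply: contra neq_i => /eqP eq_i; apply/eqP/val_inj.
Qed.

Section ReesGenExists.
Variables (R : comNzRingType) (J : nat -> R -> Prop) (A : nat -> R -> Prop).
Hypotheses (hF : filtration J) (hA : graded_ideal J A).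

Lemma graded_rees_ideal : rees_ideal J (fun p => forall i, A i p`_i).
Proof.
have hAn n := graded_ideal_deg hA n.
split=> [p Ap i|]; first exact: (graded_ideal_sub hA (Ap i)).
split=> [i|]; first by rewrite coef0; exact: (ideal0 (hAn i)).
split=> [p q Ap Aq i|a p Ra Ap i]; first by rewrite coefD; exact: (idealD (hAn i)).
rewrite coefM; apply: (ideal_sum (hAn i)) => j _.
have le_ji : (j <= i)%N by rewrite -ltnS.
by have := graded_ideal_shift hA (Ra j) (Ap (i - j)%N); rewrite subnKC.
Qed.

Lemma rees_gen_exists : noetherian_filtration J -> exists S, rees_gen J A S.
Proof.
move=> hN; have [s [_ s_gen]] := hN _ graded_rees_ideal.
have sA q : q \in s -> forall i, A i q`_i.
  by move=> sq; apply/s_gen/(rees_lin_comb_mem hF sq).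
pose S := allpairs_dep (fun (q : {poly R}) i => (i, q`_i)) s (fun q => iota 0 (size q)).
have SA p : p \in S -> A p.1 p.2 by case/allpairsPdep => [q [i [sq _ ->]]]; exact: sA.
exists S; split=> [p /SA /(graded_ideal_sub hA) //|n x].
rewrite (rees_combP hF); split; last exact: (rees_span_graded hA SA).
move=> Ax.
have AxX i : A i (x *: 'X^n)`_i.
  rewrite coefZ coefXn; case: eqP => [->|_]; first by rewrite mulr1.
  by rewrite mulr0; exact: (ideal0 (graded_ideal_deg hA i)).
have [c [c_rees eq_xX]] := (s_gen _).1 AxX.
have -> : x = (x *: 'X^n)`_n by rewrite coefZ coefXn eqxx mulr1.
rewrite eq_xX coef_sum; apply: (rees_span_sum) => k _.
rewrite coefM; apply: (rees_span_sum) => j _.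
have le_jn : (j <= n)%N by rewrite -ltnS.
have [lt_size|ge_size] := ltnP (n - j) (size s`_k); last first.
  by rewrite [s`_k`_(n - j)]nth_default // mulr0; exact: rees_span0.
apply: (rees_span_gen (p := ((n - j)%N, s`_k`_(n - j)))) => /=.
- apply/allpairsPdep; exists s`_k, (n - j)%N; split=> //; last by rewrite mem_iota.
  exact: mem_nth.
- exact: leq_subr.
- by rewrite subKn //; apply: c_rees.
Qed.

End ReesGenExists.

Section ArIdeal.
Variables (R : comNzRingType) (J : nat -> R -> Prop) (I : R -> Prop).
Hypotheses (hF : filtration J) (hI : is_ideal I).
Local Notation A := (ar_ideal J I).

Lemma ar_ideal_graded : graded_ideal J A.
Proof.
split=> [n|]; last split=> [n x [] //|k n r x Jr [Jx Ix]].
  split; first by split; [exact: (filtration0 hF) | exact: (ideal0 hI)].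
  split=> [x y [Jx Ix] [Jy Iy]|a x [Jx Ix]].
    by split; [exact: (filtrationD hF) | exact: (idealD hI)].
  by split; [exact: (filtrationMl hF) | exact: (idealMl hI)].
by split; [exact: (filtrationM hF _ Jr Jx) | exact: (idealMl hI)].
Qed.

Lemma ar_ideal_le k n x : (k <= n)%N -> A n x -> A k x.
Proof. by move=> le_kn [Jx Ix]; split=> //; exact: (filtration_le hF le_kn). Qed.

Lemma in_idealE : in_ideal J I = gr_in J A.
Proof.
apply: functional_extensionality => n; apply: functional_extensionality => x.
apply: propositional_extensionality.
split=> [[Jx [L [L_init [y [Ly Jxy]]]]]|[Jx [a [[Ja Ia] Jxa]]]].
  split=> //; exists y; split=> //.
  apply: (rees_span_graded ar_ideal_graded (S := L)); last exact/(rees_combP hF).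
  by move=> p /L_init [Ip [Jp _]].
(* [in_ideal] only uses initial forms of elements of exact degree; if a lies in
   J_(n+1), so does x, and the empty family suffices. *)
split=> //; have [Ja1|Ja1] := classic (J n.+1 a).
  exists [::]; split=> //; exists 0; split; first exact/(rees_combP hF)/rees_span0.
  by rewrite subr0 -(subrK a x); apply: (filtrationD hF).
exists [:: (n, a)]; split; first by move=> p; rewrite inE => /eqP ->.
exists a; split=> //; apply/(rees_combP hF).
exact: (rees_span_mem hF (p := (n, a))) (mem_head _ _).
Qed.

Variable m : R -> Prop.
Hypotheses (hm : is_ideal m) (hm1 : ~ m 1).
Hypothesis hmax : forall K : R -> Prop, is_ideal K -> ~ K 1 -> forall x, K x -> m x.

Lemma max_mul_ar_pred n x :
  (forall y, J 1 y -> m y) -> max_mul J m A n.+1 x -> max_mul J m A n x.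
Proof.
move=> J1m; elim=> [|y z _ My _ Mz|u a mu Aa|k r a lt0k le_kn Jr Aa].
- exact: max_mul0.
- exact: max_mulD.
- by apply: max_mul_max => //; apply: (ar_ideal_le (leqnSn n) Aa).
have [eq_k1|neq_k1] := eqVneq k 1%N.
  rewrite eq_k1 subSS subn0 in Jr Aa.
  by apply: max_mul_max => //; apply: J1m.
apply: (@max_mul_pos _ _ _ _ _ k.-1); try lia.
  exact: (filtration_le hF (leq_pred k) Jr).
by have -> : (n - k.-1 = n.+1 - k)%N by lia.
Qed.

Lemma maxdeg_rees_le_gr S T : rees_min_gen J A S -> gr_gen J (gr_in J A) T ->
  (maxdeg S <= maxdeg T)%N.
Proof.
move=> minS BT; have AS := minS.1.
have SA p : p \in S -> A p.1 p.2 := rees_gen_mem hF AS.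
have [->|/maxdeg_attained [p Sp eq_p]] := eqVneq S [::]; first by rewrite /maxdeg big_nil.
rewrite -eq_p leqNgt; apply/negP => lt_Tp.
apply: (rees_min_gen_not_max_mul hF hm hm1 hmax minS Sp).
(* Either J_1 = R, or J_1 is a proper ideal and hence contained in m. *)
have [J11|nJ11] := classic (J 1 1).
  case: p Sp {eq_p} lt_Tp => [[|d] a] Sp //= _.
  rewrite -[a]mul1r; apply: (@max_mul_pos _ _ _ _ _ 1%N) => //.
  by rewrite subSS subn0; apply: (ar_ideal_le (leqnSn d)); apply: SA Sp.
have J1m : forall y, J 1 y -> m y := hmax (filtration_ideal hF 1) nJ11.
have [y [My Jpy]] := gr_gen_max_mul hF m BT lt_Tp (gr_in_graded hF ar_ideal_graded (SA p Sp)).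
have Mpy : max_mul J m A p.1.+1 (p.2 - y).
  apply: (rees_span_max_mul m SA); first by rewrite eq_p.
  apply/(rees_genP hF _ _ AS); split=> //.
  by apply: (idealB hI); [exact: (SA p Sp).2 | exact: (max_mul_graded ar_ideal_graded My).2].
by rewrite -(subrK y p.2); apply: max_mulD => //; apply: max_mul_ar_pred.
Qed.

End ArIdeal.

Theorem proposition5p5 (R : comNzRingType) (J : nat -> R -> Prop) (I : R -> Prop) :
  noetherian_ring R -> local_ring R -> filtration J -> noetherian_filtration J ->
  is_ideal I ->
  (exists S, rees_min_gen J (ar_ideal J I) S) /\
  (exists T, gr_min_gen J (in_ideal J I) T) /\
  (forall S T, rees_min_gen J (ar_ideal J I) S -> gr_min_gen J (in_ideal J I) T ->
     maxdeg S = maxdeg T).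
Proof.
(* Finiteness comes from the Noetherian Rees algebra. *)
move=> _ [m [hm [hm1 hmax]]] hF hN hI.
have hA := ar_ideal_graded hF hI.
rewrite (in_idealE hF hI).
have [S0 AS0] := rees_gen_exists hF hA hN.
split; first exact: (exists_minimal_rem (P := rees_gen J _) AS0).
split; first exact: (exists_minimal_rem (P := gr_gen J _) (rees_gen_gr_in hF AS0)).
move=> S T minS minT; apply/eqP; rewrite eqn_leq.
rewrite (maxdeg_rees_le_gr hF hI hm hm1 hmax minS minT.1).
by rewrite (maxdeg_gr_le_rees hF hA hm hm1 hmax minS.1 minT).
Qed.
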